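(* Let $a<b$, $\lambda>0$, let $H:\mathbb{R}\to\mathbb{R}$, $H(y):=\tfrac12\left(\tfrac12 y^2-\lambda\right)^2$, let $\theta\in C[a,b]$ with $\min_{x\in[a,b]}\theta(x)>0$, and let $F\in C^1[a,b]$ with $F(a)=F(b)=0$, $F(x)\neq 0$ for $x\in(a,b)$ and $\|F\|_\infty<(2\lambda/3)^{3/2}$. Let $X:=C_0[a,b]:=\{v\in C[a,b]\mid v(a)=v(b)=0\}$ be endowed with the norm $\|\cdot\|_p$ for some $p\in[1,\infty]$, and define $$K:X\to\mathbb{R},\qquad K(v):=\int_a^b\theta\cdot\big(H\circ v-Fv\big).$$ Then $K$ is Gâteaux differentiable (at every point of $X$); moreover, for $v\in X$, $K$ is Fréchet differentiable at $v$ if and only if $p\geq 4$.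
   Context: $\|\cdot\|_p$ denotes the $L^p(a,b)$-norm restricted to $X$ (for $p=\infty$ the supremum norm). Integrals are Riemann integrals over $[a,b]$. *)

From Stdlib Require Import Reals.
From Coquelicot Require Import Coquelicot.
Open Scope R_scope.

(* Functions on [a,b] are represented as functions R -> R; only their
   values on [a,b] matter. *)

Definition cont_on (a b : R) (v : R -> R) : Prop :=
  forall x, a <= x <= b ->
  forall eps, 0 < eps -> exists delta, 0 < delta /\
    forall y, a <= y <= b -> Rabs (y - x) < delta -> Rabs (v y - v x) < eps.

Definition C1_on (a b : R) (F : R -> R) : Prop :=
  exists F' : R -> R, cont_on a b F' /\
    forall x, a <= x <= b ->
    forall eps, 0 < eps -> exists delta, 0 < delta /\
      forall y, a <= y <= b -> Rabs (y - x) < delta ->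
        Rabs (F y - F x - F' x * (y - x)) <= eps * Rabs (y - x).

Definition in_X (a b : R) (v : R -> R) : Prop :=
  cont_on a b v /\ v a = 0 /\ v b = 0.

(* x^q for x >= 0, with the convention 0^q = 0 (q > 0) *)
Definition rpow (x q : R) : R :=
  if Req_EM_T x 0 then 0 else Rpower x q.

Definition supnorm (a b : R) (v : R -> R) : R :=
  real (Lub_Rbar (fun r => exists x, a <= x <= b /\ r = Rabs (v x))).

Definition Lpnorm (a b q : R) (v : R -> R) : R :=
  rpow (RInt (fun x => rpow (Rabs (v x)) q) a b) (/ q).

Definition pnorm (a b : R) (p : Rbar) (v : R -> R) : R :=
  match p with
  | Finite q => Lpnorm a b q v
  | _ => supnorm a b v
  end.

Definition bounded_linear (a b : R) (N : (R -> R) -> R)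
  (L : (R -> R) -> R) : Prop :=
  (forall u w, in_X a b u -> in_X a b w ->
     L (fun x => u x + w x) = L u + L w) /\
  (forall c u, in_X a b u -> L (fun x => c * u x) = c * L u) /\
  (exists C, forall u, in_X a b u -> Rabs (L u) <= C * N u).

Definition gateaux_diff (a b : R) (N : (R -> R) -> R)
  (K : (R -> R) -> R) (v : R -> R) : Prop :=
  exists L, bounded_linear a b N L /\
    forall h, in_X a b h ->
      is_lim (fun t => (K (fun x => v x + t * h x) - K v) / t) 0 (L h).

Definition frechet_diff (a b : R) (N : (R -> R) -> R)
  (K : (R -> R) -> R) (v : R -> R) : Prop :=
  exists L, bounded_linear a b N L /\
    forall eps, 0 < eps -> exists delta, 0 < delta /\
      forall h, in_X a b h -> 0 < N h < delta ->
        Rabs (K (fun x => v x + h x) - K v - L h) <= eps * N h.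

Definition Hfun (lam y : R) : R := / 2 * (/ 2 * y ^ 2 - lam) ^ 2.

Definition Kfun (a b lam : R) (theta F : R -> R) (v : R -> R) : R :=
  RInt (fun x => theta x * (Hfun lam (v x) - F x * v x)) a b.

From Stdlib Require Import Reals Lra Lia FunctionalExtensionality.
From Coquelicot Require Import Coquelicot.
Open Scope R_scope.

(* K(v + t h) is a polynomial of degree 4 in t whose coefficients are the
   weighted moments  int c_k h^k  (k = 1..4) of h, the linear one being the
   derivative.  Each moment is bounded by ||h||_p^k as soon as k <= p (Young's
   inequality), which gives Gateaux differentiability for every p and Frechet
   differentiability for p >= 4.  For p = q < 4, a plateau of height H and
   width ~ H^(-q) has a fixed L^q norm, while the second symmetric difference
   K(v + h) + K(v - h) - 2 K(v), dominated by  int theta h^4 / 8 ~ H^(4 - q),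
   is unbounded; Frechet differentiability would make it O(||h||_q). *)

(** * Continuity on a compact interval *)

Lemma continuity_pt_eps_delta (f : R -> R) (x : R) :
  continuity_pt f x <->
  forall eps, 0 < eps -> exists d, 0 < d /\
    forall y, Rabs (y - x) < d -> Rabs (f y - f x) < eps.
Proof.
  split.
  - intros Hf eps Heps. destruct (Hf eps Heps) as [d [Hd Hy]].
    exists d; split; [lra |]. intros y Hyx.
    destruct (Req_dec y x) as [-> | Hne].
    + unfold Rminus; rewrite Rplus_opp_r, Rabs_R0; lra.
    + apply (Hy y). split; [split; [exact I | auto] | exact Hyx].
  - intros H eps Heps. destruct (H eps Heps) as [d [Hd Hy]].
    exists d; split; [lra |]. intros y [_ Hyx]. apply Hy, Hyx.
Qed.

Definition clamp (a b x : R) : R := Rmax a (Rmin b x).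

Lemma clamp_in a b x : a <= b -> a <= clamp a b x <= b.
Proof. intros; unfold clamp, Rmax, Rmin; repeat destruct Rle_dec; lra. Qed.

Lemma clamp_id a b x : a <= x <= b -> clamp a b x = x.
Proof. intros; unfold clamp, Rmax, Rmin; repeat destruct Rle_dec; lra. Qed.

Lemma clamp_below a b x : a <= b -> x <= a -> clamp a b x = a.
Proof. intros; unfold clamp, Rmax, Rmin; repeat destruct Rle_dec; lra. Qed.

Lemma clamp_above a b x : a <= b -> b <= x -> clamp a b x = b.
Proof. intros; unfold clamp, Rmax, Rmin; repeat destruct Rle_dec; lra. Qed.

Lemma clamp_lipschitz a b x y : a <= b -> Rabs (clamp a b y - clamp a b x) <= Rabs (y - x).
Proof.
  intros; unfold clamp, Rmax, Rmin; repeat destruct Rle_dec;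
    unfold Rabs; repeat destruct Rcase_abs; lra.
Qed.

Lemma continuity_clamp a b x : a <= b -> continuity_pt (clamp a b) x.
Proof.
  intros hab. apply continuity_pt_eps_delta. intros eps Heps.
  exists eps; split; [exact Heps |]. intros y Hy.
  eapply Rle_lt_trans; [apply clamp_lipschitz |]; assumption.
Qed.

Section ContinuousOnInterval.

Variables a b : R.
Hypothesis hab : a <= b.

Lemma cont_on_iff_continuity_clamp (f : R -> R) :
  cont_on a b f <-> forall x, continuity_pt (fun y => f (clamp a b y)) x.
Proof.
  split.
  - intros Hf x. apply continuity_pt_eps_delta. intros eps Heps.
    destruct (Hf (clamp a b x) (clamp_in a b x hab) eps Heps) as [d [Hd Hy]].
    exists d; split; [exact Hd |]. intros y Hyx. apply Hy; [apply clamp_in, hab |].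
    eapply Rle_lt_trans; [apply clamp_lipschitz, hab | exact Hyx].
  - intros Hf x Hx eps Heps.
    destruct (proj1 (continuity_pt_eps_delta _ x) (Hf x) eps Heps) as [d [Hd Hy]].
    exists d; split; [exact Hd |]. intros y Hy1 Hy2.
    specialize (Hy y Hy2). rewrite !clamp_id in Hy; assumption.
Qed.

Lemma cont_on_comp (g f : R -> R) :
  (forall y, continuity_pt g y) -> cont_on a b f -> cont_on a b (fun x => g (f x)).
Proof.
  intros Hg Hf. apply cont_on_iff_continuity_clamp.
  rewrite cont_on_iff_continuity_clamp in Hf. intros x.
  exact (continuity_pt_comp _ g x (Hf x) (Hg _)).
Qed.

Lemma cont_on_plus (f g : R -> R) :
  cont_on a b f -> cont_on a b g -> cont_on a b (fun x => f x + g x).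
Proof.
  rewrite !cont_on_iff_continuity_clamp. intros Hf Hg x.
  exact (continuity_pt_plus _ _ x (Hf x) (Hg x)).
Qed.

Lemma cont_on_mult (f g : R -> R) :
  cont_on a b f -> cont_on a b g -> cont_on a b (fun x => f x * g x).
Proof.
  rewrite !cont_on_iff_continuity_clamp. intros Hf Hg x.
  exact (continuity_pt_mult _ _ x (Hf x) (Hg x)).
Qed.

Lemma cont_on_const (c : R) : cont_on a b (fun _ => c).
Proof.
  apply cont_on_iff_continuity_clamp. intros x.
  apply continuity_pt_const. intros u v; reflexivity.
Qed.

Lemma cont_on_id : cont_on a b (fun x => x).
Proof. apply cont_on_iff_continuity_clamp. intros x. apply continuity_clamp, hab. Qed.

Lemma cont_on_opp (f : R -> R) : cont_on a b f -> cont_on a b (fun x => - f x).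
Proof. apply (cont_on_comp Ropp). intros y. apply continuity_pt_opp, continuity_pt_id. Qed.

Lemma cont_on_pow (f : R -> R) (k : nat) : cont_on a b f -> cont_on a b (fun x => f x ^ k).
Proof.
  apply (cont_on_comp (fun z => z ^ k)). intros y.
  apply derivable_continuous_pt, derivable_pt_pow.
Qed.

Lemma cont_on_abs (f : R -> R) : cont_on a b f -> cont_on a b (fun x => Rabs (f x)).
Proof. apply (cont_on_comp Rabs). apply Rcontinuity_abs. Qed.

Lemma cont_on_subinterval (a' b' : R) (f : R -> R) :
  a <= a' -> b' <= b -> cont_on a b f -> cont_on a' b' f.
Proof.
  intros Ha Hb Hf x Hx eps Heps. destruct (Hf x ltac:(lra) eps Heps) as [d [Hd Hy]].
  exists d; split; [exact Hd |]. intros y Hy1 Hy2. apply Hy; [lra | exact Hy2].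
Qed.

Lemma cont_on_ex_RInt (f : R -> R) : cont_on a b f -> ex_RInt f a b.
Proof.
  intros Hf. rewrite cont_on_iff_continuity_clamp in Hf.
  apply (ex_RInt_ext (fun y => f (clamp a b y))).
  - intros x Hx. rewrite Rmin_left, Rmax_right in Hx by exact hab.
    rewrite clamp_id; [reflexivity | lra].
  - apply (@ex_RInt_continuous R_CompleteNormedModule). intros z _.
    apply continuity_pt_filterlim, Hf.
Qed.

Lemma cont_on_bounded (f : R -> R) :
  cont_on a b f -> exists M, 0 <= M /\ forall x, a <= x <= b -> Rabs (f x) <= M.
Proof.
  intros Hf. rewrite cont_on_iff_continuity_clamp in Hf.
  destruct (continuity_ab_maj (fun y => Rabs (f (clamp a b y))) a b hab) as [m [Hm _]].
  - intros c _. exact (continuity_pt_comp _ Rabs c (Hf c) (Rcontinuity_abs _)).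
  - exists (Rabs (f (clamp a b m))). split; [apply Rabs_pos |]. intros x Hx.
    specialize (Hm x Hx). rewrite clamp_id in Hm; assumption.
Qed.

End ContinuousOnInterval.

Lemma C1_on_cont_on a b F : C1_on a b F -> cont_on a b F.
Proof.
  intros [F' [_ HF]] x Hx eps Heps.
  destruct (HF x Hx 1 Rlt_0_1) as [d [Hd Hy]].
  set (K := Rabs (F' x) + 2).
  assert (HK : 0 < K) by (unfold K; generalize (Rabs_pos (F' x)); lra).
  exists (Rmin d (eps / K)). split; [apply Rmin_pos; [exact Hd | apply Rdiv_lt_0_compat; lra] |].
  intros y Hy1 Hy2. assert (Hd1 := Rmin_l d (eps / K)). assert (Hd2 := Rmin_r d (eps / K)).
  specialize (Hy y Hy1 ltac:(lra)).
  assert (Hlip : Rabs (F y - F x) <= (Rabs (F' x) + 1) * Rabs (y - x)).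
  { replace (F y - F x) with ((F y - F x - F' x * (y - x)) + F' x * (y - x)) by ring.
    eapply Rle_trans; [apply Rabs_triang |]. rewrite Rabs_mult. lra. }
  assert (Rabs (y - x) * K < eps).
  { apply Rlt_le_trans with (eps / K * K); [apply Rmult_lt_compat_r; lra | right; field; lra]. }
  unfold K in *. generalize (Rabs_pos (y - x)); nra.
Qed.

(** * Moments and L^p norms *)

Lemma RInt_Rplus (f g : R -> R) a b :
  ex_RInt f a b -> ex_RInt g a b -> RInt (fun x => f x + g x) a b = RInt f a b + RInt g a b.
Proof. exact (RInt_plus f g a b). Qed.

Lemma RInt_Rscal (f : R -> R) a b k :
  ex_RInt f a b -> RInt (fun x => k * f x) a b = k * RInt f a b.
Proof. exact (RInt_scal f a b k). Qed.

Lemma RInt_Rconst a b c : RInt (fun _ => c) a b = c * (b - a).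
Proof. rewrite RInt_const. apply Rmult_comm. Qed.

Lemma RInt_Chasles_cont_on (f : R -> R) a m b :
  a <= m <= b -> cont_on a b f -> RInt f a m + RInt f m b = RInt f a b.
Proof.
  intros Hm Hf.
  apply (@RInt_Chasles R_CompleteNormedModule); apply cont_on_ex_RInt; try lra;
    apply (cont_on_subinterval a b); (lra || exact Hf).
Qed.

Lemma rpow_neq0 x q : x <> 0 -> rpow x q = Rpower x q.
Proof. intros H; unfold rpow; destruct Req_EM_T; [contradiction | reflexivity]. Qed.

Lemma rpow_0 q : rpow 0 q = 0.
Proof. unfold rpow; destruct Req_EM_T; [reflexivity | contradiction]. Qed.

Lemma rpow_ge0 x q : 0 <= rpow x q.
Proof. unfold rpow; destruct Req_EM_T; [lra | left; apply exp_pos]. Qed.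

Lemma Rpower_gt0 x q : 0 < Rpower x q.
Proof. apply exp_pos. Qed.

Lemma Rpower_Rinv_l x q : 0 < x -> q <> 0 -> Rpower (Rpower x (/ q)) q = x.
Proof. intros Hx Hq. rewrite Rpower_mult, Rinv_l, Rpower_1; auto. Qed.

Lemma Rpower_Rinv_r x q : 0 < x -> q <> 0 -> Rpower (Rpower x q) (/ q) = x.
Proof. intros Hx Hq. rewrite Rpower_mult, Rinv_r, Rpower_1; auto. Qed.

Lemma continuity_rpow_abs q y : 0 < q -> continuity_pt (fun z => rpow (Rabs z) q) y.
Proof.
  intros Hq. destruct (Req_dec y 0) as [-> | Hy].
  - apply continuity_pt_eps_delta. intros eps Heps.
    exists (Rpower eps (/ q)). split; [apply Rpower_gt0 |]. intros z Hz.
    rewrite Rabs_R0, rpow_0, Rminus_0_r. rewrite Rminus_0_r in Hz.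
    destruct (Req_dec (Rabs z) 0) as [E | E].
    + rewrite E, rpow_0, Rabs_R0; exact Heps.
    + rewrite rpow_neq0 by exact E. rewrite Rabs_pos_eq by (left; apply Rpower_gt0).
      rewrite <- (Rpower_Rinv_l eps q) by lra.
      apply Rlt_Rpower_l; [exact Hq |]. split; [| exact Hz].
      generalize (Rabs_pos z); lra.
  - assert (Hy0 : 0 < Rabs y) by (apply Rabs_pos_lt, Hy).
    apply (continuity_pt_locally_ext (fun z => exp (q * ln (Rabs z))) _ (Rabs y)); [exact Hy0 | |].
    + intros z Hz. rewrite rpow_neq0; [reflexivity |].
      intros E. apply Rabs_eq_0 in E. subst z.
      unfold Rdist in Hz. rewrite Rminus_0_l, Rabs_Ropp in Hz. lra.
    + apply (continuity_pt_comp (fun z => q * ln (Rabs z)) exp).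
      * apply (continuity_pt_scal (fun z => ln (Rabs z))).
        apply (continuity_pt_comp Rabs ln); [apply Rcontinuity_abs |].
        apply derivable_continuous_pt. exists (/ Rabs y). apply derivable_pt_lim_ln, Hy0.
      * apply derivable_continuous_pt, derivable_pt_exp.
Qed.

Lemma cont_on_rpow_abs a b q u :
  a <= b -> 0 < q -> cont_on a b u -> cont_on a b (fun x => rpow (Rabs (u x)) q).
Proof.
  intros hab Hq. apply (cont_on_comp a b hab (fun z => rpow (Rabs z) q)).
  intros y; apply continuity_rpow_abs, Hq.
Qed.

Ltac cont_on_tac :=
  unfold Rminus, Rdiv;
  repeat first
    [ assumption | apply cont_on_plus | apply cont_on_opp | apply cont_on_mult
    | apply cont_on_pow | apply cont_on_abs | apply cont_on_rpow_abs
    | apply cont_on_const | apply cont_on_id | lra ].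

Ltac ex_RInt_tac := apply cont_on_ex_RInt; cont_on_tac.

(* Concavity of [ln]: [s ln u + (1 - s) ln 1 <= ln (s u + 1 - s)]. *)
Lemma Rpower_le_affine s u : 0 < s <= 1 -> 0 < u -> Rpower u s <= s * u + (1 - s).
Proof.
  intros Hs Hu. set (m := s * u + (1 - s)).
  assert (Hm : 0 < m) by (unfold m; nra).
  assert (ln_le : forall x, 0 < x -> ln x <= x - 1).
  { intros x Hx. generalize (exp_ineq1_le (ln x)). rewrite exp_ln; lra. }
  assert (H1 := ln_le (u / m) ltac:(apply Rdiv_lt_0_compat; lra)).
  assert (H2 := ln_le (/ m) ltac:(apply Rinv_0_lt_compat; lra)).
  unfold Rdiv in H1. rewrite ln_mult in H1 by (try apply Rinv_0_lt_compat; lra).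
  rewrite ln_Rinv in H1, H2 by lra.
  assert (E : s * (u * / m - 1) + (1 - s) * (/ m - 1) = 0) by (unfold m in *; field; lra).
  unfold Rpower. rewrite <- (exp_ln m) by lra.
  destruct (Rle_lt_or_eq_dec (s * ln u) (ln m)) as [Hlt | ->]; [nra | | lra].
  left; apply exp_increasing, Hlt.
Qed.

Lemma pow_le_young (y c p : R) (k : nat) :
  0 <= y -> 0 < c -> (1 <= k)%nat -> INR k <= p ->
  y ^ k <= INR k / p * rpow y p * Rpower c (INR k - p) + (1 - INR k / p) * c ^ k.
Proof.
  intros Hy Hc Hk Hkp.
  assert (Hk1 : 1 <= INR k) by (apply (le_INR 1); exact Hk).
  assert (Hs : 0 < INR k / p <= 1).
  { split; [apply Rdiv_lt_0_compat; lra |].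
    apply Rmult_le_reg_r with p; [lra |]. field_simplify; lra. }
  assert (Hck : 0 < c ^ k) by (apply pow_lt, Hc).
  destruct Hy as [Hy | <-].
  2: { rewrite pow_i, rpow_0 by lia. nra. }
  rewrite rpow_neq0 by lra.
  assert (H := Rpower_le_affine (INR k / p) (Rpower (y / c) p) Hs (Rpower_gt0 _ _)).
  rewrite Rpower_mult in H. replace (p * (INR k / p)) with (INR k) in H by (field; lra).
  rewrite Rpower_pow in H by (apply Rdiv_lt_0_compat; lra).
  apply Rmult_le_compat_r with (r := c ^ k) in H; [| lra].
  rewrite <- Rpow_mult_distr in H. replace (y / c * c) with y in H by (field; lra).
  eapply Rle_trans; [exact H |]. right.
  rewrite Rmult_plus_distr_r, !Rmult_assoc. do 2 f_equal.
  rewrite <- (Rpower_pow k c) by exact Hc. unfold Rpower, Rdiv.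
  rewrite <- !exp_plus, ln_mult, ln_Rinv by (try apply Rinv_0_lt_compat; lra).
  f_equal; ring.
Qed.

Lemma RInt_pow_abs_le_young a b q k u :
  a <= b -> (1 <= k)%nat -> INR k <= q -> cont_on a b u -> forall c, 0 < c ->
  RInt (fun x => Rabs (u x) ^ k) a b <=
  INR k / q * Rpower c (INR k - q) * RInt (fun x => rpow (Rabs (u x)) q) a b
  + (1 - INR k / q) * c ^ k * (b - a).
Proof.
  intros hab Hk Hkq Hu c Hc.
  assert (Hq : 0 < q) by (assert (1 <= INR k) by (apply (le_INR 1); exact Hk); lra).
  set (A := INR k / q * Rpower c (INR k - q)). set (B := (1 - INR k / q) * c ^ k).
  rewrite <- RInt_Rscal, <- RInt_Rconst, <- RInt_Rplus by ex_RInt_tac.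
  apply RInt_le; [lra | ex_RInt_tac | ex_RInt_tac |].
  intros x _. unfold A, B.
  eapply Rle_trans; [apply (pow_le_young _ c q k (Rabs_pos _) Hc Hk Hkq) | right; ring].
Qed.

(* Young's inequality with scale [c = ||u||_q]; the constant [1 + (b - a)] is not sharp. *)
Lemma RInt_pow_abs_le_Lpnorm a b q k u :
  a < b -> (1 <= k)%nat -> INR k <= q -> cont_on a b u ->
  RInt (fun x => Rabs (u x) ^ k) a b <= (1 + (b - a)) * Lpnorm a b q u ^ k.
Proof.
  intros hab Hk Hkq Hu.
  assert (Hk1 : 1 <= INR k) by (apply (le_INR 1); exact Hk).
  assert (Hs : 0 < INR k / q <= 1).
  { split; [apply Rdiv_lt_0_compat; lra |].
    apply Rmult_le_reg_r with q; [lra |]. field_simplify; lra. }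
  assert (young := RInt_pow_abs_le_young a b q k u ltac:(lra) Hk Hkq Hu).
  set (I := RInt (fun x => rpow (Rabs (u x)) q) a b) in *.
  set (X := RInt (fun x => Rabs (u x) ^ k) a b) in *.
  assert (HI : 0 <= I) by (apply RInt_ge_0; [lra | ex_RInt_tac | intros; apply rpow_ge0]).
  unfold Lpnorm. fold I. destruct HI as [HI | HI].
  - rewrite rpow_neq0 by lra. set (N := Rpower I (/ q)).
    assert (HN : 0 < N) by apply Rpower_gt0.
    assert (E : Rpower N (INR k - q) * I = N ^ k).
    { rewrite <- (Rpower_Rinv_l I q) by lra. fold N.
      rewrite <- Rpower_plus. replace (INR k - q + q) with (INR k) by ring.
      apply Rpower_pow, HN. }
    specialize (young N HN). rewrite Rmult_assoc, E in young.
    assert (0 < N ^ k) by (apply pow_lt, HN).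
    assert (0 <= (1 - INR k / q) * (b - a) <= b - a) by (split; [apply Rmult_le_pos |]; nra).
    nra.
  - rewrite <- HI, rpow_0, pow_i, Rmult_0_r by lia.
    apply Rle_plus_epsilon. intros eps Heps.
    set (c := Rpower (eps / (b - a)) (/ INR k)).
    assert (Ec : c ^ k = eps / (b - a)).
    { unfold c. rewrite <- Rpower_pow by apply Rpower_gt0.
      apply Rpower_Rinv_l; [apply Rdiv_lt_0_compat |]; lra. }
    specialize (young c ltac:(apply Rpower_gt0)).
    rewrite <- HI, Rmult_0_r, Rplus_0_l, Ec in young.
    replace ((1 - INR k / q) * (eps / (b - a)) * (b - a)) with ((1 - INR k / q) * eps)
      in young by (field; lra).
    nra.
Qed.

Lemma Rabs_le_supnorm a b u x : cont_on a b u -> a <= x <= b -> Rabs (u x) <= supnorm a b u.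
Proof.
  intros Hu Hx. destruct (cont_on_bounded a b ltac:(lra) u Hu) as [M [_ HM]].
  unfold supnorm.
  set (E := fun r => exists x, a <= x <= b /\ r = Rabs (u x)).
  destruct (Lub_Rbar_correct E) as [Hub Hlub].
  assert (Hle : Rbar_le (Lub_Rbar E) M).
  { apply Hlub. intros r [y [Hy ->]]. apply HM, Hy. }
  assert (Hge : Rbar_le (Rabs (u x)) (Lub_Rbar E)) by (apply Hub; exists x; auto).
  destruct (Lub_Rbar E); simpl in *; easy.
Qed.

Lemma RInt_pow_abs_le_pnorm a b p k u :
  a < b -> (1 <= k)%nat -> Rbar_le (INR k) p -> cont_on a b u ->
  RInt (fun x => Rabs (u x) ^ k) a b <= (1 + (b - a)) * pnorm a b p u ^ k.
Proof.
  intros hab Hk Hkp Hu.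
  destruct p as [q | |]; simpl in Hkp |- *; [apply RInt_pow_abs_le_Lpnorm; assumption | | easy].
  set (S := supnorm a b u).
  assert (HS : forall x, a <= x <= b -> Rabs (u x) <= S) by (intros; apply Rabs_le_supnorm; assumption).
  assert (0 <= S ^ k) by (apply pow_le; generalize (HS a ltac:(lra)) (Rabs_pos (u a)); lra).
  apply Rle_trans with (RInt (fun _ => S ^ k) a b).
  - apply RInt_le; [lra | ex_RInt_tac | apply ex_RInt_const |].
    intros x Hx. apply pow_incr. split; [apply Rabs_pos | apply HS; lra].
  - rewrite RInt_Rconst. nra.
Qed.

Lemma Lpnorm_opp a b q u : Lpnorm a b q (fun x => -1 * u x) = Lpnorm a b q u.
Proof.
  unfold Lpnorm. do 2 f_equal. apply functional_extensionality. intros x.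
  rewrite Rabs_mult, Rabs_m1, Rmult_1_l. reflexivity.
Qed.

Definition moment (a b : R) (c h : R -> R) (k : nat) : R := RInt (fun x => c x * h x ^ k) a b.

Lemma Rabs_moment_le a b p k c h M :
  a < b -> (1 <= k)%nat -> Rbar_le (INR k) p -> cont_on a b c -> cont_on a b h ->
  (forall x, a <= x <= b -> Rabs (c x) <= M) ->
  Rabs (moment a b c h k) <= M * (1 + (b - a)) * pnorm a b p h ^ k.
Proof.
  intros hab Hk Hkp Hc Hh HM.
  assert (HM0 : 0 <= M) by (generalize (HM a ltac:(lra)) (Rabs_pos (c a)); lra).
  unfold moment.
  eapply Rle_trans; [apply abs_RInt_le; [lra | ex_RInt_tac] |].
  apply Rle_trans with (RInt (fun x => M * Rabs (h x) ^ k) a b).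
  - apply RInt_le; [lra | ex_RInt_tac
                   | ex_RInt_tac |].
    intros x Hx. rewrite Rabs_mult, <- RPow_abs.
    apply Rmult_le_compat_r; [apply pow_le, Rabs_pos | apply HM; lra].
  - rewrite RInt_Rscal, Rmult_assoc by ex_RInt_tac.
    apply Rmult_le_compat_l; [exact HM0 |]. apply RInt_pow_abs_le_pnorm; assumption.
Qed.

Lemma Rabs_moment_le_sqr a b p k c :
  a < b -> (2 <= k)%nat -> Rbar_le (INR k) p -> cont_on a b c ->
  exists M, 0 <= M /\ forall h, cont_on a b h -> 0 <= pnorm a b p h <= 1 ->
    Rabs (moment a b c h k) <= M * pnorm a b p h ^ 2.
Proof.
  intros hab Hk Hkp Hc. destruct (cont_on_bounded a b ltac:(lra) c Hc) as [M [HM0 HM]].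
  exists (M * (1 + (b - a))). split; [apply Rmult_le_pos; lra |]. intros h Hh HN.
  set (N := pnorm a b p h) in *.
  assert (HNk : N ^ k <= N ^ 2).
  { replace k with (2 + (k - 2))%nat by lia. rewrite pow_add.
    assert (N ^ (k - 2) <= 1) by (rewrite <- (pow1 (k - 2)); apply pow_incr; lra).
    assert (0 <= N ^ 2) by apply pow2_ge_0. nra. }
  eapply Rle_trans; [apply (Rabs_moment_le a b p k c h M); (lia || assumption) |].
  apply Rmult_le_compat_l; [apply Rmult_le_pos; lra | exact HNk].
Qed.

Lemma moment1_bounded_linear a b p c :
  a < b -> Rbar_le 1 p -> cont_on a b c -> bounded_linear a b (pnorm a b p) (fun h => moment a b c h 1).
Proof.
  intros hab Hp Hc. unfold moment. split; [| split].
  - intros u w [Hu _] [Hw _].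
    rewrite <- RInt_Rplus by ex_RInt_tac.
    f_equal; apply functional_extensionality; intros; ring.
  - intros k u [Hu _].
    rewrite <- RInt_Rscal by ex_RInt_tac.
    f_equal; apply functional_extensionality; intros; ring.
  - destruct (cont_on_bounded a b ltac:(lra) c Hc) as [M [_ HM]].
    exists (M * (1 + (b - a))). intros u [Hu _].
    rewrite <- (pow_1 (pnorm a b p u)).
    exact (Rabs_moment_le a b p 1 c u M hab (le_n 1) Hp Hc Hu HM).
Qed.

(** * Plateau functions *)

Lemma Rpower_large (K e : R) : 1 <= K -> 0 < e ->
  exists H, 1 <= H /\ forall r, e <= r -> K <= Rpower H r.
Proof.
  intros HK He. exists (Rpower K (/ e)). split.
  - rewrite <- (Rpower_O K) by lra. apply Rle_Rpower; [exact HK |].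
    left; apply Rinv_0_lt_compat, He.
  - intros r Hr. rewrite <- (Rpower_Rinv_l K e) at 1 by lra.
    apply Rle_Rpower; [| exact Hr].
    rewrite <- (Rpower_O K) by lra. apply Rle_Rpower; [exact HK |].
    left; apply Rinv_0_lt_compat, He.
Qed.

Lemma plateau_height_exists (q A B C : R) : 1 <= q < 4 -> 0 <= A -> 0 <= B -> 0 <= C ->
  exists H, 1 <= H /\ A <= H ^ 2 /\ B <= Rpower H q /\ C < Rpower H (4 - q).
Proof.
  intros Hq HA HB HC.
  destruct (Rpower_large (1 + A + B + C) (Rmin 1 (4 - q))) as [H [HH1 HH]];
    [lra | apply Rmin_pos; lra |].
  assert (He1 := Rmin_l 1 (4 - q)). assert (He2 := Rmin_r 1 (4 - q)).
  exists H. split; [exact HH1 |]. split; [| split].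
  - rewrite <- Rpower_pow by lra. apply Rle_trans with (1 + A + B + C); [lra |].
    apply HH. simpl; lra.
  - apply Rle_trans with (1 + A + B + C); [lra | apply HH; lra].
  - apply Rlt_le_trans with (1 + A + B + C); [lra | apply HH; lra].
Qed.

Lemma RInt_le_of_support a b l r f M :
  a <= l <= r -> r <= b -> cont_on a b f ->
  (forall x, a <= x <= b -> (x < l \/ r < x) -> f x = 0) ->
  (forall x, l <= x <= r -> f x <= M) -> RInt f a b <= (r - l) * M.
Proof.
  intros Hl Hr Hf Hout HM.
  assert (Hzero : forall a' b', a <= a' <= b' -> b' <= b ->
    (forall x, a' < x < b' -> f x = 0) -> RInt f a' b' = 0).
  { intros a' b' H1 H2 Hz. rewrite (RInt_ext f (fun _ => 0)), RInt_Rconst; [exact (Rmult_0_l _) |].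
    intros x Hx. rewrite Rmin_left, Rmax_right in Hx by lra. apply Hz, Hx. }
  rewrite <- (RInt_Chasles_cont_on f a l b), <- (RInt_Chasles_cont_on f l r b)
    by (try apply (cont_on_subinterval a b); (lra || exact Hf)).
  rewrite (Hzero a l), (Hzero r b) by (lra || (intros; apply Hout; lra)).
  assert (RInt f l r <= RInt (fun _ => M) l r).
  { apply RInt_le; [lra | | apply ex_RInt_const | intros; apply HM; lra].
    apply cont_on_ex_RInt; [lra |]. apply (cont_on_subinterval a b); (lra || exact Hf). }
  rewrite RInt_Rconst in H. lra.
Qed.

Lemma RInt_ge_of_subinterval a b l r f M :
  a <= l <= r -> r <= b -> cont_on a b f ->
  (forall x, a <= x <= b -> 0 <= f x) ->
  (forall x, l <= x <= r -> M <= f x) -> (r - l) * M <= RInt f a b.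
Proof.
  intros Hl Hr Hf Hpos HM.
  assert (Hsub : forall a' b', a <= a' <= b' -> b' <= b -> ex_RInt f a' b').
  { intros a' b' H1 H2. apply cont_on_ex_RInt; [lra |].
    apply (cont_on_subinterval a b); (lra || exact Hf). }
  rewrite <- (RInt_Chasles_cont_on f a l b), <- (RInt_Chasles_cont_on f l r b)
    by (try apply (cont_on_subinterval a b); (lra || exact Hf)).
  assert (0 <= RInt f a l) by (apply RInt_ge_0; [lra | apply Hsub; lra | intros; apply Hpos; lra]).
  assert (0 <= RInt f r b) by (apply RInt_ge_0; [lra | apply Hsub; lra | intros; apply Hpos; lra]).
  assert (RInt (fun _ => M) l r <= RInt f l r).
  { apply RInt_le; [lra | apply ex_RInt_const | apply Hsub; lra | intros; apply HM; lra]. }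
  rewrite RInt_Rconst in H1. lra.
Qed.

Definition plateau (c w H x : R) : R := H * clamp 0 1 (2 - Rabs (x - c) / w).

Lemma plateau_range c w H x : 0 <= H -> 0 <= plateau c w H x <= H.
Proof. intros HH. unfold plateau. assert (Hc := clamp_in 0 1 (2 - Rabs (x - c) / w) ltac:(lra)). nra. Qed.

Lemma plateau_outside c w H x : 0 < w -> (x <= c - 2 * w \/ c + 2 * w <= x) -> plateau c w H x = 0.
Proof.
  intros Hw Hx. unfold plateau.
  assert (2 <= Rabs (x - c) / w).
  { apply Rmult_le_reg_r with w; [exact Hw |]. field_simplify; [| lra].
    unfold Rabs; destruct Rcase_abs; lra. }
  rewrite clamp_below by lra. ring.
Qed.

Lemma plateau_inside c w H x : 0 < w -> c - w <= x <= c + w -> plateau c w H x = H.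
Proof.
  intros Hw Hx. unfold plateau.
  assert (Rabs (x - c) / w <= 1).
  { apply Rmult_le_reg_r with w; [exact Hw |]. field_simplify; [| lra].
    unfold Rabs; destruct Rcase_abs; lra. }
  rewrite clamp_above by lra. ring.
Qed.

Section Plateau.

Variables (a b c w H : R).
Hypotheses (Hw : 0 < w) (Ha : a <= c - 2 * w) (Hb : c + 2 * w <= b).

Let h := plateau c w H.

Lemma cont_on_plateau : cont_on a b h.
Proof.
  unfold h, plateau. apply cont_on_mult; [lra | apply cont_on_const; lra |].
  apply (cont_on_comp a b ltac:(lra) (clamp 0 1)); [intros; apply continuity_clamp; lra |].
  cont_on_tac.
Qed.

Lemma plateau_in_X : in_X a b h.
Proof. split; [exact cont_on_plateau | split; apply plateau_outside; lra]. Qed.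

Lemma RInt_rpow_plateau q : 0 < q -> 0 < H ->
  2 * w * Rpower H q <= RInt (fun x => rpow (Rabs (h x)) q) a b <= 4 * w * Rpower H q.
Proof.
  intros Hq HH0. assert (Hh := cont_on_plateau).
  split.
  - replace (2 * w) with (c + w - (c - w)) by ring.
    apply RInt_ge_of_subinterval; [lra | lra | cont_on_tac | intros; apply rpow_ge0 |].
    intros x Hx. unfold h. rewrite plateau_inside, Rabs_pos_eq, rpow_neq0 by lra. lra.
  - replace (4 * w) with (c + 2 * w - (c - 2 * w)) by ring.
    apply RInt_le_of_support; [lra | lra | cont_on_tac | |].
    + intros x _ Hx. unfold h. rewrite plateau_outside, Rabs_R0, rpow_0 by lra. reflexivity.
    + intros x _. assert (Hx := plateau_range c w H x ltac:(lra)). fold h in Hx.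
      destruct (Req_dec (Rabs (h x)) 0) as [E | E].
      * rewrite E, rpow_0. left; apply Rpower_gt0.
      * rewrite rpow_neq0 by exact E. rewrite Rabs_pos_eq by lra.
        apply Rle_Rpower_l; [lra |]. split; [| lra].
        destruct Hx as [[Hx | Hx] _]; [exact Hx | rewrite <- Hx, Rabs_R0 in E; lra].
Qed.

Lemma plateau_moments_ge (c2 c4 : R -> R) (M2 m4 : R) : 0 <= H ->
  cont_on a b c2 -> cont_on a b c4 ->
  (forall x, a <= x <= b -> Rabs (c2 x) <= M2) -> (forall x, a <= x <= b -> m4 <= c4 x) -> 0 <= m4 ->
  2 * w * H ^ 2 * (m4 * H ^ 2 - 2 * M2) <= moment a b c2 h 2 + moment a b c4 h 4.
Proof.
  intros HH Hc2 Hc4 HM2 Hm4 Hm40. assert (Hh := cont_on_plateau).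
  assert (Hrange : forall x, 0 <= h x <= H) by (intros; apply plateau_range, HH).
  assert (I2 : RInt (fun x => h x ^ 2) a b <= 4 * w * H ^ 2).
  { replace (4 * w) with (c + 2 * w - (c - 2 * w)) by ring.
    apply RInt_le_of_support; [lra | lra | cont_on_tac | |].
    - intros x _ Hx. unfold h. rewrite plateau_outside by lra. ring.
    - intros x _. apply pow_incr, Hrange. }
  assert (I4 : 2 * w * H ^ 4 <= RInt (fun x => h x ^ 4) a b).
  { replace (2 * w) with (c + w - (c - w)) by ring.
    apply RInt_ge_of_subinterval; [lra | lra | cont_on_tac | intros; apply pow_le, Hrange |].
    intros x Hx. unfold h. rewrite plateau_inside by lra. lra. }
  assert (A2 : - M2 * RInt (fun x => h x ^ 2) a b <= moment a b c2 h 2).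
  { rewrite <- RInt_Rscal by ex_RInt_tac. apply RInt_le; [lra | ex_RInt_tac | ex_RInt_tac |].
    intros x Hx. assert (Hx2 := HM2 x ltac:(lra)). apply Rabs_le_between in Hx2.
    assert (0 <= h x ^ 2) by apply pow2_ge_0. nra. }
  assert (A4 : m4 * RInt (fun x => h x ^ 4) a b <= moment a b c4 h 4).
  { rewrite <- RInt_Rscal by ex_RInt_tac. apply RInt_le; [lra | ex_RInt_tac | ex_RInt_tac |].
    intros x Hx. apply Rmult_le_compat_r; [apply pow_le, Hrange | apply Hm4; lra]. }
  assert (HM20 : 0 <= M2) by (generalize (HM2 a ltac:(lra)) (Rabs_pos (c2 a)); lra).
  assert (0 <= H ^ 2) by apply pow2_ge_0.
  replace (H ^ 4) with (H ^ 2 * H ^ 2) in I4 by ring.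
  nra.
Qed.

Lemma Lpnorm_plateau q : 0 < q -> 0 < H ->
  0 < Lpnorm a b q h <= Rpower (4 * w * Rpower H q) (/ q).
Proof.
  intros Hq HH. destruct (RInt_rpow_plateau q Hq HH) as [Hlo Hhi].
  assert (0 < 2 * w * Rpower H q) by (assert (0 < Rpower H q) by apply Rpower_gt0; nra).
  unfold Lpnorm. rewrite rpow_neq0 by lra.
  split; [apply Rpower_gt0 |].
  apply Rle_Rpower_l; [left; apply Rinv_0_lt_compat, Hq | lra].
Qed.

End Plateau.

(** * The functional K *)

Lemma frechet_symmetric_difference a b (N K : (R -> R) -> R) (v : R -> R) :
  frechet_diff a b N K v ->
  forall eps, 0 < eps -> exists delta, 0 < delta /\
    forall h, in_X a b h -> in_X a b (fun x => -1 * h x) -> N (fun x => -1 * h x) = N h ->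
    0 < N h < delta ->
    Rabs (K (fun x => v x + h x) + K (fun x => v x + -1 * h x) - 2 * K v) <= 2 * eps * N h.
Proof.
  intros [L [[_ [Lscal _]] HL]] eps Heps.
  destruct (HL eps Heps) as [delta [Hdelta Hsmall]].
  exists delta. split; [exact Hdelta |]. intros h Hh Hmh HNm HN.
  assert (Hp := Hsmall h Hh HN).
  assert (Hm := Hsmall (fun x => -1 * h x) Hmh ltac:(rewrite HNm; exact HN)).
  rewrite HNm, (Lscal (-1) h Hh) in Hm.
  replace (K (fun x => v x + h x) + K (fun x => v x + -1 * h x) - 2 * K v)
    with ((K (fun x => v x + h x) - K v - L h) + (K (fun x => v x + -1 * h x) - K v - -1 * L h))
    by ring.
  eapply Rle_trans; [apply Rabs_triang | lra].
Qed.

(* [theta H^(k)(v) / k!] for the quartic [H]; the first one also carries the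
   [F]-term, which is linear in [v]. *)
Definition Kcoef1 (lam : R) (theta F v : R -> R) (x : R) : R :=
  theta x * ((v x ^ 2 / 2 - lam) * v x - F x).
Definition Kcoef2 (lam : R) (theta v : R -> R) (x : R) : R :=
  theta x * (3 / 4 * v x ^ 2 - lam / 2).
Definition Kcoef3 (theta v : R -> R) (x : R) : R := theta x * v x / 2.
Definition Kcoef4 (theta : R -> R) (x : R) : R := theta x / 8.

Section KExpansion.

Variables (a b lam : R) (theta F v : R -> R).
Hypotheses (hab : a < b) (Htheta : cont_on a b theta) (HF : cont_on a b F) (Hv : cont_on a b v).

Let K := Kfun a b lam theta F.
Let DK (h : R -> R) : R := moment a b (Kcoef1 lam theta F v) h 1.

Lemma Kfun_expansion (h : R -> R) (t : R) : cont_on a b h ->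
  K (fun x => v x + t * h x) =
  K v + t * DK h + t ^ 2 * moment a b (Kcoef2 lam theta v) h 2
  + t ^ 3 * moment a b (Kcoef3 theta v) h 3 + t ^ 4 * moment a b (Kcoef4 theta) h 4.
Proof.
  intros Hh. unfold K, DK, Kfun, moment, Kcoef1, Kcoef2, Kcoef3, Kcoef4, Hfun.
  rewrite <- !RInt_Rscal, <- !RInt_Rplus by ex_RInt_tac.
  f_equal. apply functional_extensionality. intros x. field.
Qed.

Lemma Kderiv_bounded_linear (p : Rbar) : Rbar_le 1 p -> bounded_linear a b (pnorm a b p) DK.
Proof.
  intros Hp. apply (moment1_bounded_linear a b p (Kcoef1 lam theta F v) hab Hp).
  unfold Kcoef1; cont_on_tac.
Qed.

Lemma Kfun_gateaux (p : Rbar) : Rbar_le 1 p -> gateaux_diff a b (pnorm a b p) K v.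
Proof.
  intros Hp. exists DK. split; [apply Kderiv_bounded_linear, Hp |].
  intros h [Hh _].
  set (q := fun t => DK h + t * moment a b (Kcoef2 lam theta v) h 2
    + t ^ 2 * moment a b (Kcoef3 theta v) h 3 + t ^ 3 * moment a b (Kcoef4 theta) h 4).
  apply (is_lim_ext_loc q).
  - exists (mkposreal 1 Rlt_0_1). intros t _ Ht.
    unfold q. rewrite Kfun_expansion by exact Hh. field. exact Ht.
  - replace (DK h) with (q 0) by (unfold q; ring).
    apply is_lim_continuity. unfold q. apply derivable_continuous_pt. reg.
Qed.

Lemma Kfun_frechet (p : Rbar) : Rbar_le 4 p -> frechet_diff a b (pnorm a b p) K v.
Proof.
  intros Hp4.
  assert (Hp : forall k : nat, (1 <= k <= 4)%nat -> Rbar_le (INR k) p).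
  { intros k Hk. assert (INR k <= 4) by (replace 4 with (INR 4) by (simpl; ring); apply le_INR; lia).
    destruct p; simpl in *; lra || easy. }
  exists DK. split; [apply Kderiv_bounded_linear, (Hp 1%nat); lia |].
  destruct (Rabs_moment_le_sqr a b p 2 (Kcoef2 lam theta v) hab ltac:(lia) ltac:(apply Hp; lia)
    ltac:(unfold Kcoef2; cont_on_tac)) as [M2 [HM2 B2]].
  destruct (Rabs_moment_le_sqr a b p 3 (Kcoef3 theta v) hab ltac:(lia) ltac:(apply Hp; lia)
    ltac:(unfold Kcoef3; cont_on_tac)) as [M3 [HM3 B3]].
  destruct (Rabs_moment_le_sqr a b p 4 (Kcoef4 theta) hab ltac:(lia) ltac:(apply Hp; lia)
    ltac:(unfold Kcoef4; cont_on_tac)) as [M4 [HM4 B4]].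
  set (C := M2 + M3 + M4).
  assert (HC : 0 <= C) by (unfold C; lra).
  intros eps Heps. exists (Rmin 1 (eps / (C + 1))).
  split; [apply Rmin_pos; [lra | apply Rdiv_lt_0_compat; lra] |].
  intros h [Hh _] [HN0 HNd].
  assert (Hd1 := Rmin_l 1 (eps / (C + 1))). assert (Hd2 := Rmin_r 1 (eps / (C + 1))).
  specialize (B2 h Hh ltac:(lra)). specialize (B3 h Hh ltac:(lra)). specialize (B4 h Hh ltac:(lra)).
  set (N := pnorm a b p h) in *.
  replace (fun x => v x + h x) with (fun x => v x + 1 * h x)
    by (apply functional_extensionality; intros; ring).
  rewrite Kfun_expansion by exact Hh.
  set (R2 := moment a b (Kcoef2 lam theta v) h 2) in *.
  set (R3 := moment a b (Kcoef3 theta v) h 3) in *.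
  set (R4 := moment a b (Kcoef4 theta) h 4) in *.
  replace (K v + 1 * DK h + 1 ^ 2 * R2 + 1 ^ 3 * R3 + 1 ^ 4 * R4 - K v - DK h)
    with (R2 + R3 + R4) by ring.
  assert (Hrem : Rabs (R2 + R3 + R4) <= C * N ^ 2).
  { eapply Rle_trans; [apply Rabs_triang |].
    eapply Rle_trans; [apply Rplus_le_compat_r, Rabs_triang |]. unfold C. lra. }
  assert (HCN : C * N <= eps).
  { apply Rle_trans with ((C + 1) * (eps / (C + 1))); [apply Rmult_le_compat; lra |].
    right; field; lra. }
  simpl in Hrem. nra.
Qed.

Lemma Kfun_symmetric_difference (h : R -> R) : cont_on a b h ->
  K (fun x => v x + h x) + K (fun x => v x + -1 * h x) - 2 * K v =
  2 * (moment a b (Kcoef2 lam theta v) h 2 + moment a b (Kcoef4 theta) h 4).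
Proof.
  intros Hh.
  replace (fun x => v x + h x) with (fun x => v x + 1 * h x)
    by (apply functional_extensionality; intros; ring).
  rewrite !Kfun_expansion by exact Hh. ring.
Qed.

Lemma Kfun_symmetric_difference_plateau (c w H m M2 : R) :
  0 < w -> a <= c - 2 * w -> c + 2 * w <= b -> 0 <= H -> 0 < m ->
  (forall x, a <= x <= b -> m <= theta x) ->
  (forall x, a <= x <= b -> Rabs (Kcoef2 lam theta v x) <= M2) -> 32 * M2 <= m * H ^ 2 ->
  m / 4 * w * H ^ 4 <=
  K (fun x => v x + plateau c w H x) + K (fun x => v x + -1 * plateau c w H x) - 2 * K v.
Proof.
  intros Hw Ha Hb HH Hm Htheta_m HM2 HM2H.
  rewrite Kfun_symmetric_difference by (apply cont_on_plateau; assumption).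
  assert (Hlow := plateau_moments_ge a b c w H Hw Ha Hb (Kcoef2 lam theta v) (Kcoef4 theta)
    M2 (m / 8) HH ltac:(unfold Kcoef2; cont_on_tac) ltac:(unfold Kcoef4; cont_on_tac) HM2
    ltac:(intros x Hx; unfold Kcoef4; specialize (Htheta_m x Hx); lra) ltac:(lra)).
  assert (0 <= 2 * w * H ^ 2) by (assert (0 <= H ^ 2) by apply pow2_ge_0; nra).
  assert (2 * w * H ^ 2 * (m / 16 * H ^ 2) <= 2 * w * H ^ 2 * (m / 8 * H ^ 2 - 2 * M2))
    by (apply Rmult_le_compat_l; lra).
  replace (H ^ 4) with (H ^ 2 * H ^ 2) by ring. lra.
Qed.

(* The plateau below has [L^q] norm at most [delta / 2] while its second
   symmetric difference grows like [H^(4 - q)]. *)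
Lemma Kfun_not_frechet (q m : R) :
  1 <= q < 4 -> 0 < m -> (forall x, a <= x <= b -> m <= theta x) ->
  ~ frechet_diff a b (pnorm a b (Finite q)) K v.
Proof.
  intros Hq Hm Htheta_m Hfr.
  destruct (frechet_symmetric_difference _ _ _ _ _ Hfr 1 Rlt_0_1) as [delta [Hdelta Hsd]].
  destruct (cont_on_bounded a b ltac:(lra) (Kcoef2 lam theta v)) as [M2 [HM2 bound2]];
    [unfold Kcoef2; cont_on_tac |].
  set (s := Rpower (delta / 2) q).
  assert (Hs : 0 < s) by apply Rpower_gt0.
  destruct (plateau_height_exists q (32 * M2 / m) (s / (b - a)) (16 * delta / (m * s)) Hq)
    as [H [HH1 [HH2 [HHq HH4q]]]];
    [apply Rdiv_le_0_compat; lra | apply Rdiv_le_0_compat; lra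
    | apply Rdiv_le_0_compat; [lra | nra] |].
  assert (HHq0 : 0 < Rpower H q) by apply Rpower_gt0.
  set (w := s / (4 * Rpower H q)).
  assert (Hw : 0 < w) by (apply Rdiv_lt_0_compat; lra).
  assert (Hs_w : 4 * w * Rpower H q = s) by (unfold w; field; lra).
  assert (Hwidth : 4 * w <= b - a).
  { apply Rmult_le_reg_r with (Rpower H q); [lra |]. rewrite Hs_w.
    apply Rmult_le_compat_r with (r := b - a) in HHq; [| lra].
    field_simplify in HHq; lra. }
  set (c := (a + b) / 2). set (h := plateau c w H).
  assert (Ha : a <= c - 2 * w) by (unfold c; lra).
  assert (Hb : c + 2 * w <= b) by (unfold c; lra).
  assert (Hh := plateau_in_X a b c w H Hw Ha Hb). fold h in Hh.
  assert (Hmh : in_X a b (fun x => -1 * h x)).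
  { destruct Hh as [Hh [Hha Hhb]]. split; [cont_on_tac | rewrite Hha, Hhb; split; ring]. }
  assert (HN := Lpnorm_plateau a b c w H Hw Ha Hb q ltac:(lra) ltac:(lra)).
  fold h in HN. rewrite Hs_w in HN. unfold s in HN. rewrite Rpower_Rinv_r in HN by lra.
  assert (Hsym := Hsd h Hh Hmh (Lpnorm_opp a b q h) ltac:(simpl; lra)).
  simpl in Hsym. apply Rabs_le_between in Hsym.
  assert (Hlow := Kfun_symmetric_difference_plateau c w H m M2 Hw Ha Hb ltac:(lra) Hm Htheta_m
    bound2 ltac:(apply Rmult_le_compat_l with (r := m) in HH2; [field_simplify in HH2 |]; lra)).
  fold h in Hlow.
  assert (Hgrow : delta < m / 4 * w * H ^ 4).
  { replace (m / 4 * w * H ^ 4) with (m * s / 16 * Rpower H (4 - q)).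
    - apply Rmult_lt_compat_l with (r := m * s / 16) in HH4q; [| nra].
      field_simplify in HH4q; lra.
    - rewrite <- Hs_w, <- (Rpower_pow 4 H) by lra.
      replace (INR 4) with (4 - q + q) by (simpl; ring). rewrite Rpower_plus. field. }
  lra.
Qed.

End KExpansion.

Theorem proposition1 (a b lam : R) (theta F : R -> R) (p : Rbar) :
  a < b -> 0 < lam ->
  cont_on a b theta ->
  (exists m, 0 < m /\ forall x, a <= x <= b -> m <= theta x) ->
  C1_on a b F -> F a = 0 -> F b = 0 ->
  (forall x, a < x < b -> F x <> 0) ->
  supnorm a b F < Rpower (2 * lam / 3) (3 / 2) ->
  Rbar_le 1 p ->
  (forall v, in_X a b v -> gateaux_diff a b (pnorm a b p) (Kfun a b lam theta F) v) /\
  (forall v, in_X a b v ->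
     (frechet_diff a b (pnorm a b p) (Kfun a b lam theta F) v <-> Rbar_le 4 p)).
Proof.
  intros hab _ Htheta [m [Hm Htheta_m]] HF1 _ _ _ _ Hp.
  assert (HF := C1_on_cont_on a b F HF1).
  split.
  - intros v [Hv _]. exact (Kfun_gateaux a b lam theta F v hab Htheta HF Hv p Hp).
  - intros v [Hv _]. split; [| exact (Kfun_frechet a b lam theta F v hab Htheta HF Hv p)].
    intros Hfr. destruct p as [q | |]; simpl in Hp |- *; [| exact I | contradiction].
    destruct (Rle_or_lt 4 q) as [H4 | H4]; [exact H4 | exfalso].
    exact (Kfun_not_frechet a b lam theta F v hab Htheta HF Hv q m (conj Hp H4) Hm Htheta_m Hfr).
Qed.
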